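(* Let $G$ be a homogeneous complete $k$-partite graph, with vertices $t_1,\dots,t_s$. The following are equivalent: (a) the graph $\mathcal{G}_{I_c(G)}$ of $I_c(G)$ is a complete graph; (b) $G$ is a complete graph; (c) ${\rm v}(I_c(G))=\alpha_0(G)-1$.
   Context: $G$ is a homogeneous complete $k$-partite graph if $G=G_1*\cdots*G_k$, $k\ge2$, is the join of pairwise vertex-disjoint graphs without edges each having the same number $p$ of vertices (the join contains all edges between vertices of distinct $G_i$). Such a $G$ is unmixed (all minimal vertex covers have the same size). $\alpha_0(G)$ is the minimum size of a vertex cover. $I_c(G)\subset S=K[t_1,\ldots,t_s]$ ($K$ a field) is generated by $\prod_{t_i\in C}t_i$ over minimal vertex covers $C$. For unmixed $G$ with minimal vertex covers $C_1,\ldots,C_r$, the graph $\mathcal{G}_{I_c(G)}$ has vertex set $\{C_1,\ldots,C_r\}$ and $\{C_i,C_j\}$ ($i\neq j$) is an edge iff $|C_i\cup C_j|=|C_i|+1$. For a graded ideal $I\subset S$, ${\rm v}(I)=\min\{d\ge0:\exists f\in S_d,\ \exists\mathfrak p\in{\rm Ass}(I),\ (I\colon f)=\mathfrak p\}$. *)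

From HB Require Import structures.
From mathcomp Require Import all_boot all_order all_algebra.
From mathcomp Require Import mpoly.
Set Implicit Arguments. Unset Strict Implicit. Unset Printing Implicit Defensive.
Import GRing.Theory.
Local Open Scope ring_scope.

Definition multipartite_graph (T : finType) (k : nat) (part : T -> 'I_k) : rel T :=
  [rel x y | part x != part y].

Definition vertex_cover (T : finType) (e : rel T) (C : {set T}) : bool :=
  [forall x, forall y, e x y ==> (x \in C) || (y \in C)].

Definition minimal_vertex_cover (T : finType) (e : rel T) (C : {set T}) : bool :=
  minset (vertex_cover e) C.

(* alpha_0(G): minimum size of a vertex cover (setT is always a cover) *)
Definition alpha0 (T : finType) (e : rel T) : nat :=
  \big[minn/#|T|]_(C : {set T} | vertex_cover e C) #|C|.

Definition complete_graph (T : finType) (e : rel T) : Prop :=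
  forall x y, x != y -> e x y.

(* the graph G_{I_c(G)} is complete: any two distinct minimal vertex covers
   C, D satisfy |C u D| = |C| + 1 *)
Definition cover_graph_complete (T : finType) (e : rel T) : Prop :=
  forall C D : {set T}, minimal_vertex_cover e C -> minimal_vertex_cover e D ->
    C != D -> #|C :|: D| = (#|C| + 1)%N.

Definition ideal_of (K : fieldType) (n : nat) := {mpoly K[n]} -> Prop.

Definition gen_ideal (K : fieldType) (n : nat) (I : finType) (P : pred I)
    (g : I -> {mpoly K[n]}) : ideal_of K n :=
  fun f => exists h : I -> {mpoly K[n]}, f = \sum_(i | P i) h i * g i.

Definition cover_ideal (K : fieldType) (n : nat) (e : rel 'I_n) : ideal_of K n :=
  gen_ideal (minimal_vertex_cover e) (fun C : {set 'I_n} => \prod_(i in C) 'X_i).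

Definition colon (K : fieldType) (n : nat) (I : ideal_of K n) (f : {mpoly K[n]})
  : ideal_of K n := fun g => I (g * f).

Definition same_ideal (K : fieldType) (n : nat) (I J : ideal_of K n) : Prop :=
  forall x, I x <-> J x.

Definition prime_ideal (K : fieldType) (n : nat) (P : ideal_of K n) : Prop :=
  (exists x, ~ P x) /\ forall a b, P (a * b) -> P a \/ P b.

Definition associated_prime (K : fieldType) (n : nat) (I P : ideal_of K n) : Prop :=
  prime_ideal P /\ exists g, same_ideal P (colon I g).

(* d is attained in the definition of v(I): some f in S_d and p in Ass(I)
   with (I : f) = p (S_d = homogeneous polynomials of degree d, incl. 0) *)
Definition v_attained (K : fieldType) (n : nat) (I : ideal_of K n) (d : nat) : Prop :=
  exists f : {mpoly K[n]}, f \is d.-homog /\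
    exists P, associated_prime I P /\ same_ideal (colon I f) P.

Definition is_v_number (K : fieldType) (n : nat) (I : ideal_of K n) (d : nat) : Prop :=
  v_attained I d /\ forall d', v_attained I d' -> (d <= d')%N.
Arguments cover_ideal K {n} e _.

(* In a complete k-partite graph whose parts V_1, ..., V_k all have p vertices,
   the minimal vertex covers are exactly the complements of the parts.  So
   alpha_0 = s - p, and two distinct minimal covers have the whole vertex set
   as union; this gives (a) <-> p = 1 <-> (b).

   For the v-number: if (I_c : f) is prime it contains a product of the
   variables of a minimal cover, hence a variable t_a, and some cover monomial
   divides a term of t_a f; so every attained degree is >= alpha_0 - 1, in any
   graph.  If a b is an edge of a loopless graph, the colon of I_c by the
   product of all variables except t_a, t_b is the kernel of the substitution
   t_a, t_b |-> 0, hence prime, of degree s - 2 = alpha_0 - 1 when G is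
   complete.  Conversely, if deg f = alpha_0 - 1 = s - p - 1 and u is a
   monomial of f, then t_c u is the squarefree monomial of a complement of a
   part for every t_c in (I_c : f); taking t_a and t_b with a, b in different
   parts forces a part inside {b}, so p = 1. *)

From HB Require Import structures.
From mathcomp Require Import all_boot all_order all_algebra.
From mathcomp Require Import mpoly.
From mathcomp Require Import zify.
Set Implicit Arguments. Unset Strict Implicit. Unset Printing Implicit Defensive.

HB.instance Definition _ := SemiGroup.isComLaw.Build nat minn minnA minnC.

Section VertexCovers.
Variables (T : finType) (e : rel T).

Lemma alpha0_le_card C : vertex_cover e C -> (alpha0 e <= #|C|)%N.
Proof. by move=> cov; rewrite /alpha0 (big_rem_AC _ _ _ _ (mem_index_enum C)) cov geq_minl. Qed.

Lemma exists_minimal_vertex_cover : exists C, minimal_vertex_cover e C.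
Proof.
have covT : vertex_cover e setT by apply/forallP => x; apply/forallP => y; rewrite in_setT implybT.
by have [C minC] := ex_minset (ex_intro (vertex_cover e) _ covT); exists C.
Qed.

Lemma vertex_cover_setC1 b : ~~ e b b -> vertex_cover e (~: [set b]).
Proof.
move=> bb; apply/forallP => x; apply/forallP => y; apply/implyP => exy.
rewrite !inE -negb_and; apply: contraNN bb => /andP[/eqP xb /eqP yb].
by rewrite -{1}xb -yb.
Qed.

End VertexCovers.

Import GRing.Theory.
Local Open Scope ring_scope.

Section Monomials.
Variables (K : fieldType) (n : nat).

Lemma exists_mcoeff_neq0 (f : {mpoly K[n]}) : f != 0 -> exists u, f@_u != 0.
Proof.
rewrite -msupp_eq0; case fE: (msupp f) => [|u r] // _; exists u.
by rewrite -mcoeff_msupp fE mem_head.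
Qed.

Lemma mcoeffMX_eq0 (q : {mpoly K[n]}) M m : ~~ (M <= m)%MM -> (q * 'X_[M])@_m = 0.
Proof.
move=> Mm; rewrite [q]mpolyE mulr_suml raddf_sum /= big1 // => u _.
rewrite -scalerAl -mpolyXD mcoeffZ mcoeffX.
case: eqP => [um|_]; last by rewrite mulr0.
by move: Mm; rewrite -um lem_addl.
Qed.

Lemma prod_mpolyX_set (C : {set 'I_n}) : \prod_(i in C) 'X_i = 'X_[mesym1 C] :> {mpoly K[n]}.
Proof.
rewrite mprodXE; congr 'X_[_]; apply/mnmP => i; rewrite mnmE mnm_sumE big_mkcond /=.
rewrite (bigD1 i) //= mnmE eqxx /= big1 ?addn0 // => j ji.
by case: (_ \in _); rewrite // mnmE (negbTE ji).
Qed.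

Lemma lem_mdeg (m1 m2 : 'X_{1..n}) : (m1 <= m2)%MM -> (mdeg m1 <= mdeg m2)%N.
Proof. by move=> m12; rewrite -(submK m12) mdegD leq_addl. Qed.

Lemma lem_mdeg_eq (m1 m2 : 'X_{1..n}) : (m1 <= m2)%MM -> (mdeg m2 <= mdeg m1)%N -> m1 = m2.
Proof.
move=> m12 deg21; have d0 : (m2 - m1)%MM = 0%MM.
  by apply/eqP; rewrite -mdeg_eq0 -leqn0 -(leq_add2r (mdeg m1)) -mdegD submK.
by rewrite -(submK m12) d0 add0m.
Qed.

Lemma mesym1_eq_addU (C : {set 'I_n}) a u :
  mesym1 C = (U_(a) + u)%MM -> a \in C /\ u = mesym1 (C :\ a).
Proof.
move/mnmP => CE; have := CE a; rewrite mnmDE mnm1E mnmE eqxx => Ca.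
have ua : u a = 0%N by case: (a \in C) Ca; lia.
split; first by case: (a \in C) Ca.
apply/mnmP => i; have := CE i; rewrite mnmDE mnm1E !mnmE !inE.
by case: (eqVneq i a) => [-> | _]; rewrite ?ua //=; case: (i \in C); lia.
Qed.

Definition kill_vars (S : {set 'I_n}) : n.-tuple {mpoly K[n]} :=
  [tuple if i \in S then 0 else 'X_i | i < n].

Lemma comp_mpoly_kill_varsX S m :
  'X_[m] \mPo kill_vars S = if [forall i in S, m i == 0%N] then 'X_[m] else 0.
Proof.
rewrite comp_mpolyX; case: ifP => [/forall_inP m0 | /negbT/forall_inPn[i iS mi]].
  rewrite [RHS]mpolyXE_id; apply: eq_bigr => i _; rewrite tnth_mktuple.
  by case: ifP => // /m0 /eqP ->; rewrite !expr0.
by rewrite (bigD1 i) //= tnth_mktuple iS expr0n (negbTE mi) mul0r.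
Qed.

End Monomials.

Section GeneratedIdeal.
Variables (K : fieldType) (n : nat) (I : finType) (P : pred I) (g : I -> {mpoly K[n]}).
Local Notation J := (gen_ideal P g).

Lemma gen_ideal0 : J 0.
Proof. by exists (fun _ => 0); rewrite big1 // => i _; rewrite mul0r. Qed.

Lemma gen_idealD x y : J x -> J y -> J (x + y).
Proof.
move=> [hx ->] [hy ->]; exists (fun i => hx i + hy i).
by rewrite -big_split /=; apply: eq_bigr => i _; rewrite mulrDl.
Qed.

Lemma gen_idealMl c x : J x -> J (c * x).
Proof.
move=> [h ->]; exists (fun i => c * h i).
by rewrite mulr_sumr; apply: eq_bigr => i _; rewrite mulrA.
Qed.

Lemma gen_ideal_gen i : P i -> J (g i).
Proof.
move=> Pi; exists (fun j => (j == i)%:R).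
rewrite (bigD1 i) //= eqxx mul1r big1 ?addr0 // => j /andP[_ /negbTE ->].
by rewrite mul0r.
Qed.

Lemma gen_ideal_sum (T : Type) (r : seq T) (F : T -> {mpoly K[n]}) :
  (forall t, J (F t)) -> J (\sum_(t <- r) F t).
Proof.
move=> JF; elim: r => [|t r IHr]; first by rewrite big_nil; apply: gen_ideal0.
by rewrite big_cons; apply: gen_idealD.
Qed.

Lemma gen_ideal_mcoeff (M : I -> 'X_{1..n}) x m :
  (forall i, g i = 'X_[M i]) -> J x -> x@_m != 0 -> exists2 i, P i & (M i <= m)%MM.
Proof.
move=> gM [h ->]; rewrite raddf_sum /=.
case: (boolP [exists i, P i && (M i <= m)%MM]) => [/existsP[i /andP[]] | noM].
  by exists i.
rewrite big1 ?eqxx // => i Pi; rewrite gM mcoeffMX_eq0 //.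
by apply: contra noM => Mm; apply/existsP; exists i; rewrite Pi.
Qed.

Lemma colon_gen_ideal1 f : prime_ideal (colon J f) -> ~ colon J f 1.
Proof. by move=> [[x Jxf] _]; rewrite /colon mul1r => Jf; apply/Jxf/gen_idealMl. Qed.

Lemma colon_prime_neq0 f : prime_ideal (colon J f) -> f != 0.
Proof.
move=> prime_colon; apply: contra_notN (colon_gen_ideal1 prime_colon) => /eqP f0.
by rewrite /colon f0 mulr0; apply: gen_ideal0.
Qed.

End GeneratedIdeal.

Section PrimeIdeals.
Variables (K : fieldType) (n : nat).

Lemma prime_ideal_same (A B : ideal_of K n) :
  same_ideal A B -> prime_ideal B -> prime_ideal A.
Proof.
move=> AB [[x Bx] primeB]; split; first by exists x => /AB.
by move=> a b /AB /primeB [] /AB; [left | right].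
Qed.

Lemma v_attainedP (I : ideal_of K n) d :
  v_attained I d <-> exists2 f, f \is d.-homog & prime_ideal (colon I f).
Proof.
split=> [[f [f_homog [Q [[primeQ _] fQ]]]] | [f f_homog prime_colon]].
  by exists f => //; apply: prime_ideal_same fQ primeQ.
by exists f; split => //; exists (colon I f); split=> //; split=> //; exists f.
Qed.

Lemma rmorph_kernel_prime (R : idomainType) (phi : {rmorphism {mpoly K[n]} -> R}) :
  prime_ideal (fun x => phi x = 0).
Proof.
split; first by exists 1; rewrite rmorph1; apply/eqP; exact: oner_neq0.
by move=> a b /eqP; rewrite rmorphM mulf_eq0 => /orP[] /eqP; [left | right].
Qed.

Lemma prime_ideal_prod (Q : ideal_of K n) (T : Type) (r : seq T) (R : pred T) F :
  prime_ideal Q -> ~ Q 1 -> Q (\prod_(t <- r | R t) F t) -> exists2 t, R t & Q (F t).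
Proof.
move=> [_ primeQ] Q1; elim: r => [|t r IHr]; first by rewrite big_nil.
rewrite big_cons; case: ifP => Rt; last exact: IHr.
by case/primeQ => [|/IHr //]; exists t.
Qed.

End PrimeIdeals.

Section CoverIdeal.
Variables (K : fieldType) (n : nat) (e : rel 'I_n).
Local Notation Ic := (cover_ideal K e).

Lemma cover_ideal_mcoeff x m : Ic x -> x@_m != 0 ->
  exists2 C, minimal_vertex_cover e C & (mesym1 C <= m)%MM.
Proof. by apply: gen_ideal_mcoeff => C; apply: prod_mpolyX_set. Qed.

Lemma cover_ideal_mpolyX C m : minimal_vertex_cover e C -> (mesym1 C <= m)%MM -> Ic 'X_[m].
Proof.
move=> minC Cm; rewrite -(submK Cm) mpolyXD -prod_mpolyX_set.
by apply/gen_idealMl/gen_ideal_gen.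
Qed.

Lemma colon_prime_var f C : prime_ideal (colon Ic f) -> minimal_vertex_cover e C ->
  exists2 i, i \in C & colon Ic f 'X_i.
Proof.
move=> prime_colon minC.
have XC : colon Ic f (\prod_(i in C) 'X_i).
  by rewrite /colon mulrC; apply/gen_idealMl/gen_ideal_gen.
exact: prime_ideal_prod prime_colon (colon_gen_ideal1 prime_colon) XC.
Qed.

Lemma colon_var_cover f a u : colon Ic f 'X_a -> f@_u != 0 ->
  exists2 C, minimal_vertex_cover e C & (mesym1 C <= U_(a) + u)%MM.
Proof. by move=> Xa fu; apply: cover_ideal_mcoeff Xa _; rewrite mulrC mcoeffMX. Qed.

Lemma alpha0_le_v_attained d : v_attained Ic d -> (alpha0 e <= d.+1)%N.
Proof.
case/v_attainedP => f f_homog prime_colon.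
have [C0 minC0] := exists_minimal_vertex_cover e.
have [a _ Xa] := colon_prime_var prime_colon minC0.
have [u fu] := exists_mcoeff_neq0 (colon_prime_neq0 prime_colon).
have [C minC Cau] := colon_var_cover Xa fu.
have deg_u : mdeg u = d by apply: (dhomog_mf f_homog); rewrite mcoeff_msupp.
apply: leq_trans (alpha0_le_card (minsetp minC)) _.
by rewrite -mdeg_mesym1 -deg_u -add1n -(mdeg1 a) -mdegD lem_mdeg.
Qed.

Lemma colon_var_cover_eq f d a u : alpha0 e = d.+1 -> f \is d.-homog ->
  colon Ic f 'X_a -> f@_u != 0 ->
  exists2 C, minimal_vertex_cover e C & mesym1 C = (U_(a) + u)%MM.
Proof.
move=> alpha0E f_homog Xa fu; have [C minC Cau] := colon_var_cover Xa fu.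
have deg_u : mdeg u = d by apply: (dhomog_mf f_homog); rewrite mcoeff_msupp.
exists C => //; apply: lem_mdeg_eq Cau _.
rewrite mdegD mdeg1 deg_u mdeg_mesym1 add1n -alpha0E.
exact: alpha0_le_card (minsetp minC).
Qed.

Lemma cover_ideal_setC2_mpolyX a b (u : 'X_{1..n}) : ~~ e b b -> (0 < u a)%N ->
  Ic ('X_[u] * 'X_[mesym1 (~: [set a; b])]).
Proof.
move=> bb ua; have /minset_exists[D minD Db] := vertex_cover_setC1 bb.
rewrite -mpolyXD; apply: (cover_ideal_mpolyX minD); apply/mnm_lepP => i.
rewrite mnmDE !mnmE !inE; case: (boolP (i \in D)) => //= iD.
have /negbTE ib : i != b by have := subsetP Db i iD; rewrite !inE.
by rewrite ib orbF; case: eqP => [->|_]; rewrite ?addn1 ?addn0.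
Qed.

Section Edge.
Variables (a b : 'I_n).
Hypotheses (e_irr : irreflexive e) (eab : e a b).
Local Notation f := ('X_[mesym1 (~: [set a; b])] : {mpoly K[n]}).
Local Notation kill := (comp_mpoly (kill_vars K [set a; b])).

Lemma kill_cover_ideal x : Ic x -> kill x = 0.
Proof.
move=> [h ->]; rewrite rmorph_sum big1 // => C minC.
have /forallP/(_ a)/forallP/(_ b) := minsetp minC; rewrite eab /= => abC.
rewrite rmorphM /= prod_mpolyX_set comp_mpoly_kill_varsX.
case: forall_inP => [C0 | _]; last by rewrite mulr0.
case/orP: abC => xC; [move: (C0 a) | move: (C0 b)].
  by rewrite !inE eqxx mnmE xC => /(_ isT).
by rewrite !inE eqxx orbT mnmE xC => /(_ isT).
Qed.

Lemma colon_setC2E x : colon Ic f x <-> kill x = 0.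
Proof.
have kill_f : kill f = f.
  by rewrite comp_mpoly_kill_varsX ifT //; apply/forall_inP => i; rewrite mnmE in_setC => ->.
have f_neq0 : f != 0 by rewrite -msupp_eq0 msuppX.
split=> [Xf | kx].
  have /eqP := kill_cover_ideal Xf; rewrite rmorphM /= kill_f mulf_eq0 (negbTE f_neq0) orbF.
  by move/eqP.
have kill_sum : kill x = \sum_(u <- msupp x) x@_u *: kill 'X_[u].
  by rewrite {1}[x]mpolyE linear_sum; apply: eq_bigr => u _; rewrite linearZ.
(* x = x - kill x keeps exactly the terms of x divisible by t_a or t_b *)
have -> : x = \sum_(u <- msupp x) x@_u *: ('X_[u] - kill 'X_[u]).
  under eq_bigr => u _ do rewrite scalerBr.
  by rewrite sumrB -kill_sum kx subr0 -mpolyE.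
rewrite /colon mulr_suml; apply: gen_ideal_sum => u.
rewrite comp_mpoly_kill_varsX; case: ifP => [_ | /negbT/forall_inPn[i iab ui]].
  by rewrite subrr scaler0 mul0r; apply: gen_ideal0.
rewrite subr0 -scalerAl -mul_mpolyC; apply: gen_idealMl.
case/set2P: iab ui => -> ui; first by apply: cover_ideal_setC2_mpolyX; rewrite ?e_irr ?lt0n.
by rewrite [[set a; b]]setUC; apply: cover_ideal_setC2_mpolyX; rewrite ?e_irr ?lt0n.
Qed.

Lemma colon_setC2_prime : prime_ideal (colon Ic f).
Proof. exact: prime_ideal_same colon_setC2E (rmorph_kernel_prime kill). Qed.

Lemma v_attained_edge : v_attained Ic (n - 2).
Proof.
apply/v_attainedP; exists f; last exact: colon_setC2_prime.
have ab : a != b by apply: contraTneq eab => ->; rewrite e_irr.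
rewrite dhomogX /= mdeg_mesym1; apply/eqP.
have := cardsC [set a; b]; rewrite cards2 ab card_ord /= => nE.
by rewrite -[in RHS]nE addKn.
Qed.

End Edge.
End CoverIdeal.

Section MultipartiteGraph.
Variables (s k : nat) (part : 'I_s -> 'I_k).
Local Notation e := (multipartite_graph part).

Definition block j := [set x | part x == j].

Lemma multipartiteE x y : e x y = (part x != part y).
Proof. by []. Qed.

Lemma multipartite_irreflexive : irreflexive e.
Proof. by move=> x; rewrite multipartiteE eqxx. Qed.

Lemma vertex_cover_multipartiteP C : vertex_cover e C <->
  (forall x y, x \notin C -> y \notin C -> part x = part y).
Proof.
split=> [/forallP cov x y xC yC | same].
  move/forallP: (cov x) => /(_ y).
  by rewrite multipartiteE (negbTE xC) (negbTE yC) implybF negbK => /eqP.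
apply/forallP => x; apply/forallP => y; rewrite multipartiteE; apply/implyP => xy.
apply/negPn/negP; rewrite negb_or => /andP[xC yC].
by rewrite (same x y xC yC) eqxx in xy.
Qed.

Lemma vertex_cover_setC_block j : vertex_cover e (~: block j).
Proof. by apply/vertex_cover_multipartiteP => x y; rewrite !inE !negbK => /eqP-> /eqP->. Qed.

Lemma setC_blockU j j' : j != j' -> ~: block j :|: ~: block j' = setT.
Proof.
move=> jj'; apply/setP => x; rewrite !inE -negb_and.
by apply: contraNN jj' => /andP[/eqP <- /eqP <-].
Qed.

Lemma card_block_le1 a b j j' : a \in ~: block j -> a != b ->
  ~: block j :\ a = ~: block j' :\ b -> (#|block j| <= 1)%N.
Proof.
move=> aj ab eq_blocks.
have in_other x y i i' : x != y -> ~: block i :\ x = ~: block i' :\ y -> y \in block i.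
  move=> xy eq_xy; have := setD11 y (~: block i').
  by rewrite -eq_xy !inE eq_sym xy => /negbFE.
have aj' : a \in block j' by apply: in_other (esym eq_blocks); rewrite eq_sym.
have jj' : j != j' by apply: contraTneq aj' => <-; rewrite inE in aj.
rewrite -(cards1 b); apply/subset_leq_card/subsetP => x; rewrite !inE => /eqP xj.
apply: contraR jj' => xb; have : x \notin ~: block j :\ a by rewrite !inE xj eqxx andbF.
by rewrite eq_blocks !inE xb /= negbK xj.
Qed.

Variable p : nat.
Hypotheses (k_gt1 : (1 < k)%N) (p_gt0 : (0 < p)%N) (card_block : forall j, #|block j| = p).

Let j0 : 'I_k := Ordinal (ltnW k_gt1).
Let j1 : 'I_k := Ordinal k_gt1.

Lemma block_nonempty j : exists x, x \in block j.
Proof. by apply/set0Pn; rewrite -card_gt0 card_block. Qed.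

Lemma multipartite_edge : exists a b, e a b.
Proof.
have [a aj0] := block_nonempty j0; have [b bj1] := block_nonempty j1.
by exists a, b; move: aj0 bj1; rewrite multipartiteE !inE => /eqP-> /eqP->.
Qed.

Lemma minimal_vertex_cover_multipartiteP C :
  minimal_vertex_cover e C <-> exists j, C = ~: block j.
Proof.
split=> [/minsetP[cov min] | [j ->]].
  have [j sub] : exists j, ~: block j \subset C.
    case: (pickP [pred x | x \notin C]) => [x /= xC | noC]; [exists (part x) | exists j0].
      apply/subsetP => y; rewrite !inE => yx; apply/negPn/negP => yC.
      have := (vertex_cover_multipartiteP C).1 cov y x yC xC.
      by move/eqP; rewrite (negbTE yx).
    by apply/subsetP => y _; have := noC y => /= /negbFE.
  by exists j; apply/esym/min => //; apply: vertex_cover_setC_block.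
apply/minsetP; split=> [|B cov sub]; first exact: vertex_cover_setC_block.
apply/eqP; rewrite eqEsubset sub /=; apply/subsetP => x xj.
have [y yj] := block_nonempty j.
have yB : y \notin B by apply: contraL yj => /(subsetP sub); rewrite inE.
apply/negPn/negP => xB; have := (vertex_cover_multipartiteP B).1 cov x y xB yB.
by move: xj yj; rewrite !inE => /negP xj /eqP -> /eqP.
Qed.

Lemma minimal_vertex_cover_setC_block j : minimal_vertex_cover e (~: block j).
Proof. by apply/minimal_vertex_cover_multipartiteP; exists j. Qed.

Lemma card_setC_block j : #|~: block j| = (s - p)%N.
Proof.
by have := cardsC (block j); rewrite card_block card_ord => sE; rewrite -[in RHS]sE addKn.
Qed.

Lemma p_le_card_setC_block : (p <= s - p)%N.
Proof.
rewrite -(card_setC_block j0) -(card_block j1); apply/subset_leq_card/subsetP => x.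
by rewrite !inE => /eqP ->.
Qed.

Lemma alpha0_multipartite : alpha0 e = (s - p)%N.
Proof.
apply/eqP; rewrite eqn_leq -{1}(card_setC_block j0).
rewrite alpha0_le_card ?vertex_cover_setC_block //=.
apply: (big_ind (fun m => s - p <= m)%N) => [|m1 m2|C cov].
- by rewrite card_ord leq_subr.
- by rewrite leq_min => -> ->.
have [D minD DC] := minset_exists cov.
have [j Dj] := (minimal_vertex_cover_multipartiteP D).1 minD.
by rewrite -(card_setC_block j) -Dj; apply: subset_leq_card.
Qed.

Lemma complete_multipartiteE : complete_graph e <-> p = 1%N.
Proof.
split=> [complete | p1 x y xy].
  apply/eqP; rewrite eqn_leq p_gt0 andbT leqNgt -(card_block j0).
  apply/negP => /card_gt1P[x [y [xj yj xy]]]; have := complete x y xy.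
  by move: xj yj; rewrite multipartiteE !inE => /eqP-> /eqP->; rewrite eqxx.
rewrite multipartiteE; apply/eqP => same.
have : (1 < #|block (part x)|)%N by apply/card_gt1P; exists x, y; rewrite !inE same eqxx.
by rewrite card_block p1.
Qed.

Lemma cover_graph_complete_multipartiteE : cover_graph_complete e <-> p = 1%N.
Proof.
have card_setT : #|[set: 'I_s]| = s by rewrite cardsT card_ord.
have := p_le_card_setC_block; split=> [complete | p1 C D].
  have j01 : j0 != j1 by [].
  have neq : ~: block j0 != ~: block j1.
    have [x xj0] := block_nonempty j0.
    apply: contraNneq j01 => /setC_inj eq01; apply/eqP.
    by move: xj0 (xj0); rewrite {2}eq01 !inE => /eqP <- /eqP.
  have := complete _ _ (minimal_vertex_cover_setC_block j0)
                       (minimal_vertex_cover_setC_block j1) neq.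
  rewrite setC_blockU // card_setT card_setC_block; lia.
move=> /minimal_vertex_cover_multipartiteP[j ->].
move=> /minimal_vertex_cover_multipartiteP[j' ->] neq.
have jj' : j != j' by apply: contraNneq neq => ->.
rewrite setC_blockU // card_setT card_setC_block; lia.
Qed.

Variable K : fieldType.
Local Notation Ic := (cover_ideal K e).

Lemma v_attained_multipartite : v_attained Ic (s - p - 1) -> (p <= 1)%N.
Proof.
case/v_attainedP => f f_homog prime_colon.
have alpha0E : alpha0 e = (s - p - 1).+1.
  have := p_le_card_setC_block.
  by rewrite alpha0_multipartite; lia.
have [u fu] := exists_mcoeff_neq0 (colon_prime_neq0 prime_colon).
have var_block c : colon Ic f 'X_c ->
    exists2 j, c \in ~: block j & u = mesym1 (~: block j :\ c).
  move=> Xc; have [C minC] := colon_var_cover_eq alpha0E f_homog Xc fu.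
  case/mesym1_eq_addU => cC uE.
  have [j Cj] := (minimal_vertex_cover_multipartiteP C).1 minC.
  by exists j; rewrite -Cj.
have [C0 minC0] := exists_minimal_vertex_cover e.
have [a _ Xa] := colon_prime_var prime_colon minC0.
have [b ba Xb] := colon_prime_var prime_colon
  (minimal_vertex_cover_setC_block (part a)).
have ab : a != b by apply: contraTneq ba => <-; rewrite !inE negbK.
have [j aj uE] := var_block a Xa; have [j' _ uE'] := var_block b Xb.
rewrite -(card_block j); apply: (card_block_le1 (j' := j') aj ab).
by apply: inj_mesym1; rewrite -uE.
Qed.

End MultipartiteGraph.

Theorem corollary3p15 (K : fieldType) (s k p : nat) (part : 'I_s -> 'I_k) :
  (2 <= k)%N -> (1 <= p)%N ->
  (forall j : 'I_k, #|[set x | part x == j]| = p) ->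
  let e := multipartite_graph part in
  (cover_graph_complete e <-> complete_graph e) /\
  (complete_graph e <-> is_v_number (cover_ideal K e) (alpha0 e - 1)).
Proof.
move=> k_gt1 p_gt0 card_block e.
have complete_p1 := complete_multipartiteE k_gt1 p_gt0 card_block.
have alpha0E := alpha0_multipartite k_gt1 p_gt0 card_block.
split.
  exact: iff_trans (cover_graph_complete_multipartiteE k_gt1 p_gt0 card_block)
                   (iff_sym complete_p1).
apply: iff_trans complete_p1 _; rewrite alpha0E.
split=> [p1 | [attained _]]; last first.
  by apply/eqP; rewrite eqn_leq p_gt0 (v_attained_multipartite k_gt1 p_gt0 card_block attained).
have [a [b eab]] := multipartite_edge k_gt1 p_gt0 card_block.
split=> [|d attained].
  by rewrite p1 -subnDA; apply: v_attained_edge (multipartite_irreflexive part) eab.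
by have := alpha0_le_v_attained attained; rewrite alpha0E; lia.
Qed.
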